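(* Let $g\colon X\to\mathcal Q^{\vartriangle}$ be closed and convex. Then $g^{**}=g$, where for $x\in X$ $$g^{**}(x)=\bigcap_{\xi\in X^{\vartriangle},\,r\in\mathbb R,\,z^*\in C^-}\big(S_{(\xi,r,z^* )}(x)-^{\vartriangle}g^*(\xi,r,z^* )\big)$$ and $g^*\colon X^{\vartriangle}\times\mathbb R\times C^-\to\mathcal Q^{\vartriangle}$ is $g^*(\xi,r,z^* )=\bigcap_{x\in X}\big(S_{(\xi,r,z^* )}(x)-^{\vartriangle}g(x)\big)$.
   Context: $X,Z$ are separated locally convex spaces with duals $X^*,Z^*$; $C\subseteq Z$ convex cone with $0\in C$, $C^-=\{z^*\in Z^*: z^*(z)\leq0\ \forall z\in C\}$, assumed $\neq\{0\}$. $\mathcal Q^{\vartriangle}=\{A\subseteq Z: A=\operatorname{cl}\operatorname{co}(A+C)\}$ (contains $\emptyset$). $g$ is convex (closed) iff $\operatorname{gr}g=\{(x,z): z\in g(x)\}$ is convex (closed) in $X\times Z$. For $A,B\subseteq Z$: $A-^{\vartriangle}B=\{z\in Z: B+\{z\}\subseteq A\}$. For $x^*\in X^*$, $r\in\mathbb R$: $x^*_r(x)=x^*(x)-r$, $\hat x^*_r(x)=-\infty$ if $x^*(x)\leq r$, $+\infty$ otherwise; $\hat x^*=\hat x^*_0$; $X^{\vartriangle}=X^*\cup\{\hat x^*: x^*\in X^*\}$; $\xi_r=x^*_r$ if $\xi=x^*$, $\xi_r=\hat x^*_r$ if $\xi=\hat x^*$. Conaffine functions: $S_{(\xi,r,z^*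 )}(x)=\{z\in Z: \xi_r(x)\leq -z^*(z)\}$ for $\xi\in X^{\vartriangle}$, $r\in\mathbb R$, $z^*\in C^-$ (order of $\overline{\mathbb R}=\mathbb R\cup\{\pm\infty\}$). *)

From Stdlib Require Import Reals.
Open Scope R_scope.

Definition convex_in {T : Type} (add : T -> T -> T) (scal : R -> T -> T) (A : T -> Prop) : Prop :=
  forall x y t, A x -> A y -> 0 <= t <= 1 -> A (add (scal t x) (scal (1 - t) y)).

Record LCS := {
  car :> Type;
  vadd : car -> car -> car;
  vscal : R -> car -> car;
  vzero : car;
  vadd_assoc : forall x y z, vadd x (vadd y z) = vadd (vadd x y) z;
  vadd_comm : forall x y, vadd x y = vadd y x;
  vadd_0l : forall x, vadd vzero x = x;
  vadd_opp : forall x, vadd (vscal (-1) x) x = vzero;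
  vscal_1 : forall x, vscal 1 x = x;
  vscal_assoc : forall a b x, vscal a (vscal b x) = vscal (a * b) x;
  vscal_addR : forall a b x, vscal (a + b) x = vadd (vscal a x) (vscal b x);
  vscal_addV : forall a x y, vscal a (vadd x y) = vadd (vscal a x) (vscal a y);
  is_open : (car -> Prop) -> Prop;
  open_full : is_open (fun _ => True);
  open_inter : forall U V, is_open U -> is_open V -> is_open (fun x => U x /\ V x);
  open_union : forall F : (car -> Prop) -> Prop, (forall U, F U -> is_open U) ->
                 is_open (fun x => exists U, F U /\ U x);
  vadd_cont : forall W x y, is_open W -> W (vadd x y) ->
      exists U V, is_open U /\ is_open V /\ U x /\ V y /\
        forall u v, U u -> V v -> W (vadd u v);
  vscal_cont : forall W a x, is_open W -> W (vscal a x) ->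
      exists eps U, eps > 0 /\ is_open U /\ U x /\
        forall b u, Rabs (b - a) < eps -> U u -> W (vscal b u);
  loc_convex : forall W, is_open W -> W vzero ->
      exists U, is_open U /\ U vzero /\ convex_in vadd vscal U /\ forall x, U x -> W x;
  hausdorff : forall x y, x <> y ->
      exists U V, is_open U /\ is_open V /\ U x /\ V y /\ forall w, U w -> V w -> False
}.

Arguments vadd {l}. Arguments vscal {l}. Arguments vzero {l}. Arguments is_open {l}.

Definition convex {X : LCS} (A : X -> Prop) : Prop := convex_in vadd vscal A.

Definition R_open (U : R -> Prop) : Prop :=
  forall t, U t -> exists eps, eps > 0 /\ forall s, Rabs (s - t) < eps -> U s.

Definition is_dual {X : LCS} (f : X -> R) : Prop :=
  (forall x y, f (vadd x y) = f x + f y) /\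
  (forall a x, f (vscal a x) = a * f x) /\
  (forall U, R_open U -> is_open (fun x => U (f x))).

Definition closure {X : LCS} (A : X -> Prop) : X -> Prop :=
  fun x => forall U, is_open U -> U x -> exists a, A a /\ U a.

Definition conv_hull {X : LCS} (A : X -> Prop) : X -> Prop :=
  fun x => forall K, convex K -> (forall a, A a -> K a) -> K x.

Definition set_plus {X : LCS} (A B : X -> Prop) : X -> Prop :=
  fun z => exists a b, A a /\ B b /\ z = vadd a b.

Definition convex_cone {Z : LCS} (C : Z -> Prop) : Prop :=
  C vzero /\ convex C /\ forall t c, 0 <= t -> C c -> C (vscal t c).

Definition neg_dual {Z : LCS} (C : Z -> Prop) (zs : Z -> R) : Prop :=
  is_dual zs /\ forall z, C z -> zs z <= 0.

Definition inQ {Z : LCS} (C : Z -> Prop) (A : Z -> Prop) : Prop :=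
  forall z, A z <-> closure (conv_hull (set_plus A C)) z.

Definition prod_open {X Z : LCS} (W : X -> Z -> Prop) : Prop :=
  forall x z, W x z -> exists U V, is_open U /\ is_open V /\ U x /\ V z /\
    forall u v, U u -> V v -> W u v.

Definition graph_closed {X Z : LCS} (g : X -> Z -> Prop) : Prop :=
  prod_open (fun x z => ~ g x z).

Definition graph_convex {X Z : LCS} (g : X -> Z -> Prop) : Prop :=
  forall x1 z1 x2 z2 t, g x1 z1 -> g x2 z2 -> 0 <= t <= 1 ->
    g (vadd (vscal t x1) (vscal (1 - t) x2)) (vadd (vscal t z1) (vscal (1 - t) z2)).

Definition inf_diff {Z : LCS} (A B : Z -> Prop) : Z -> Prop :=
  fun z => forall b, B b -> A (vadd b z).

Inductive Rbar := Fin (r : R) | PInf | MInf.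
Definition Rbar_le (a b : Rbar) : Prop :=
  match a, b with
  | MInf, _ => True
  | _, PInf => True
  | Fin x, Fin y => x <= y
  | _, _ => False
  end.

(* X^triangle = X^* \cup { hat x^* } ; Lin f stands for x^*, Hat f for hat x^* *)
Inductive Xtri (X : LCS) := Lin (f : X -> R) | Hat (f : X -> R).
Arguments Lin {X}. Arguments Hat {X}.

Definition in_Xtri {X : LCS} (xi : Xtri X) : Prop :=
  match xi with Lin f => is_dual f | Hat f => is_dual f end.

Definition xi_r {X : LCS} (xi : Xtri X) (r : R) (x : X) : Rbar :=
  match xi with
  | Lin f => Fin (f x - r)
  | Hat f => if Rle_dec (f x) r then MInf else PInf
  end.

Definition S_conaff {X Z : LCS} (xi : Xtri X) (r : R) (zs : Z -> R) (x : X) : Z -> Prop :=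
  fun z => Rbar_le (xi_r xi r x) (Fin (- zs z)).

Definition conj1 {X Z : LCS} (g : X -> Z -> Prop) (xi : Xtri X) (r : R) (zs : Z -> R) : Z -> Prop :=
  fun w => forall x : X, inf_diff (S_conaff xi r zs x) (g x) w.

Definition conj2 {X Z : LCS} (C : Z -> Prop) (g : X -> Z -> Prop) (x : X) : Z -> Prop :=
  fun z => forall (xi : Xtri X) (r : R) (zs : Z -> R),
    in_Xtri xi -> neg_dual C zs ->
    inf_diff (S_conaff xi r zs x) (conj1 g xi r zs) z.

From Stdlib Require Import Reals Lra Classical ClassicalEpsilon FunctionalExtensionality PropExtensionality.
From mathcomp Require classical_sets.
Open Scope R_scope.

(* The inclusion g(x) ⊆ g^**(x) is immediate. Conversely, if z ∉ g(x), the point (x, z)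
   has a convex neighbourhood missing the closed convex graph of g, and the geometric
   Hahn-Banach theorem (from Zorn's lemma and one-dimensional extensions) yields
   continuous linear f, h and d > 0 with f u + h v + d <= f x + h z on gr g. Every g(x0)
   is stable under adding C, so h <= 0 on C, i.e. h ∈ C^-. Then 0 ∈ g^*(f, f x + h z - d, h)
   while z ∉ S_(f, f x + h z - d, h)(x), hence z ∉ g^**(x). *)

Record vecspace := {
  vs_car :> Type;
  vs_add : vs_car -> vs_car -> vs_car;
  vs_scal : R -> vs_car -> vs_car;
  vs_zero : vs_car;
  vs_addA : forall x y z, vs_add x (vs_add y z) = vs_add (vs_add x y) z;
  vs_addC : forall x y, vs_add x y = vs_add y x;
  vs_add0l : forall x, vs_add vs_zero x = x;
  vs_addNl : forall x, vs_add (vs_scal (-1) x) x = vs_zero;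
  vs_scal1 : forall x, vs_scal 1 x = x;
  vs_scalA : forall a b x, vs_scal a (vs_scal b x) = vs_scal (a * b) x;
  vs_scalDl : forall a b x, vs_scal (a + b) x = vs_add (vs_scal a x) (vs_scal b x);
  vs_scalDr : forall a x y, vs_scal a (vs_add x y) = vs_add (vs_scal a x) (vs_scal a y)
}.
Arguments vs_add {_}. Arguments vs_scal {_}. Arguments vs_zero {_}.

Section VecspaceTheory.
Variable V : vecspace.
Implicit Types (x y u w m n : V) (a b s t : R).

Lemma vs_add0r x : vs_add x vs_zero = x.
Proof. rewrite vs_addC; apply vs_add0l. Qed.

Lemma vs_addNr x : vs_add x (vs_scal (-1) x) = vs_zero.
Proof. rewrite vs_addC; apply vs_addNl. Qed.

Lemma vs_addIl m u w : vs_add m u = vs_add m w -> u = w.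
Proof.
  intro H. rewrite <- (vs_add0l V u), <- (vs_add0l V w), <- (vs_addNl V m).
  rewrite <- !vs_addA, H. reflexivity.
Qed.

Lemma vs_addIr m u w : vs_add u m = vs_add w m -> u = w.
Proof. rewrite (vs_addC V u), (vs_addC V w). apply vs_addIl. Qed.

Lemma vs_scal0 x : vs_scal 0 x = vs_zero.
Proof.
  apply (vs_addIl (vs_scal 0 x)). rewrite vs_add0r, <- vs_scalDl.
  f_equal; ring.
Qed.

Lemma vs_scal_zero a : vs_scal a (@vs_zero V) = vs_zero.
Proof. rewrite <- (vs_scal0 vs_zero), vs_scalA, Rmult_0_r. reflexivity. Qed.

Lemma vs_addACA x y u w : vs_add (vs_add x y) (vs_add u w) = vs_add (vs_add x u) (vs_add y w).
Proof.
  rewrite <- !vs_addA. f_equal. rewrite !vs_addA. f_equal. apply vs_addC.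
Qed.

Lemma vs_add_subKl x n : vs_add (vs_add x n) (vs_scal (-1) x) = n.
Proof. rewrite (vs_addC V x), <- vs_addA, vs_addNr. apply vs_add0r. Qed.

Lemma vs_add_eq_sub u m x n : vs_add u m = vs_add (vs_add x n) m -> x = vs_add u (vs_scal (-1) n).
Proof.
  intro H. apply vs_addIr in H. subst u.
  rewrite <- vs_addA, vs_addNr. symmetry; apply vs_add0r.
Qed.

Lemma vs_scal_eq_zero s t x : vs_scal s x = vs_scal t x -> s <> t -> x = vs_zero.
Proof.
  intros H Hst.
  assert (Hdiff : vs_scal (s - t) x = vs_zero).
  { replace (s - t) with (s + -1 * t) by ring.
    rewrite vs_scalDl, H, <- vs_scalA. apply vs_addNr. }
  rewrite <- (vs_scal1 V x). replace 1 with (/ (s - t) * (s - t)) by (field; lra).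
  rewrite <- vs_scalA, Hdiff. apply vs_scal_zero.
Qed.

Lemma vs_add_scal_sub u u' x s t :
  vs_add u (vs_scal s x) = vs_add u' (vs_scal t x) -> vs_add u (vs_scal (-1) u') = vs_scal (t - s) x.
Proof.
  intro H. apply (vs_addIr (vs_add u' (vs_scal s x))).
  rewrite (vs_addC V u' (vs_scal s x)), vs_addACA, vs_addNl, vs_add0r, H.
  rewrite vs_addA, <- vs_scalDl, vs_addC. do 2 f_equal. ring.
Qed.

Lemma vs_convex_translate t x u y w m :
  vs_add (vs_scal t (vs_add (vs_add x u) m)) (vs_scal (1 - t) (vs_add (vs_add y w) m)) =
  vs_add (vs_add (vs_add (vs_scal t x) (vs_scal (1 - t) y))
                 (vs_add (vs_scal t u) (vs_scal (1 - t) w))) m.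
Proof.
  rewrite !vs_scalDr, vs_addACA, <- vs_scalDl, vs_addACA.
  replace (t + (1 - t)) with 1 by ring. rewrite vs_scal1. reflexivity.
Qed.

End VecspaceTheory.

Section HahnBanach.
Variables (V : vecspace) (B : V -> Prop) (y : V).
Hypothesis B_convex : forall u w t, B u -> B w -> 0 <= t <= 1 ->
  B (vs_add (vs_scal t u) (vs_scal (1 - t) w)).
Hypothesis B_absorbing : forall u, exists e, e > 0 /\ forall t, Rabs t < e -> B (vs_scal t u).
Hypothesis y_notin_B : ~ B y.

Lemma B_zero : B vs_zero.
Proof.
  destruct (B_absorbing y) as [e [He HBe]]. rewrite <- (vs_scal0 V y).
  apply HBe. rewrite Rabs_R0; lra.
Qed.

(* Graphs of linear functionals on subspaces containing [y], normalised by [F y = 1]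
   and bounded by [1] on [B]. *)
Record admissible (G : V * R -> Prop) : Prop := {
  adm_functional : forall u a b, G (u, a) -> G (u, b) -> a = b;
  adm_add : forall u w a b, G (u, a) -> G (w, b) -> G (vs_add u w, a + b);
  adm_scal : forall t u a, G (u, a) -> G (vs_scal t u, t * a);
  adm_le1 : forall u a, G (u, a) -> B u -> a <= 1;
  adm_y : G (y, 1) }.

Definition y_line (p : V * R) : Prop := fst p = vs_scal (snd p) y.

Lemma y_line_admissible : admissible y_line.
Proof.
  unfold y_line; split; simpl.
  - intros u a b -> Hb. destruct (Req_dec a b) as [|Hab]; auto.
    exfalso. apply y_notin_B. rewrite (vs_scal_eq_zero V a b y Hb Hab). apply B_zero.
  - intros u w a b -> ->. symmetry. apply vs_scalDl.
  - intros t u a ->. apply vs_scalA.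
  - intros u a -> Hu. apply Rnot_lt_le. intro Ha. apply y_notin_B.
    assert (Hc := B_convex _ _ (/ a) Hu B_zero).
    rewrite vs_scal_zero, vs_add0r, vs_scalA, Rinv_l, vs_scal1 in Hc by lra.
    apply Hc. split.
    + left; apply Rinv_0_lt_compat; lra.
    + rewrite <- Rinv_1. apply Rinv_le_contravar; lra.
  - symmetry; apply vs_scal1.
Qed.

Lemma admissible_y_line_sub G : admissible G -> forall p, y_line p -> G p.
Proof.
  intros HG [u a] Hu. unfold y_line in Hu; simpl in Hu; subst u.
  rewrite <- (Rmult_1_r a) at 2. exact (adm_scal G HG a y 1 (adm_y G HG)).
Qed.

Lemma admissible_zero G : admissible G -> G (vs_zero, 0).
Proof.
  intro HG. apply (admissible_y_line_sub G HG). unfold y_line; simpl.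
  symmetry; apply vs_scal0.
Qed.

Lemma admissible_chain_union (F : (V * R -> Prop) -> Prop) :
  (forall A, F A -> admissible (fun p => y_line p \/ A p)) ->
  (forall A1 A2, F A1 -> F A2 -> (forall p, A1 p -> A2 p) \/ (forall p, A2 p -> A1 p)) ->
  admissible (fun p => y_line p \/ exists2 A, F A & A p).
Proof.
  set (U := fun p => y_line p \/ exists2 A, F A & A p).
  intros HF Htot.
  assert (common : forall p q, U p -> U q ->
    exists G, admissible G /\ (forall r, G r -> U r) /\ G p /\ G q).
  { assert (from_A : forall A p q, F A -> (y_line p \/ A p) -> (y_line q \/ A q) ->
        exists G, admissible G /\ (forall r, G r -> U r) /\ G p /\ G q).
    { intros A p q FA Hp Hq. exists (fun r => y_line r \/ A r).
      split; [apply HF; exact FA|]. split; [|tauto].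
      intros r [Hr | Hr]; [left | right; exists A]; auto. }
    intros p q [Hp | [A FA Ap]] [Hq | [A' FA' Aq]].
    - exists y_line. split; [apply y_line_admissible|]. split; [intros r Hr; left|]; auto.
    - apply (from_A A'); auto.
    - apply (from_A A); auto.
    - destruct (Htot A A' FA FA') as [Hsub | Hsub].
      + apply (from_A A'); auto.
      + apply (from_A A); auto. }
  split.
  - intros u a b Ha Hb. destruct (common _ _ Ha Hb) as (G & HG & _ & Ga & Gb).
    exact (adm_functional G HG u a b Ga Gb).
  - intros u w a b Ha Hb. destruct (common _ _ Ha Hb) as (G & HG & GU & Ga & Gb).
    apply GU, adm_add; auto.
  - intros t u a Ha. destruct (common _ _ Ha Ha) as (G & HG & GU & Ga & _).
    apply GU, adm_scal; auto.
  - intros u a Ha Hu. destruct (common _ _ Ha Ha) as (G & HG & _ & Ga & _).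
    exact (adm_le1 G HG u a Ga Hu).
  - left. unfold y_line; simpl. symmetry; apply vs_scal1.
Qed.

Section Extension.
Variables (G : V * R -> Prop) (v : V).
Hypothesis G_admissible : admissible G.

Lemma extension_gap u1 a1 u2 a2 s t : G (u1, a1) -> G (u2, a2) -> 0 < s -> 0 < t ->
  B (vs_add u1 (vs_scal (- s) v)) -> B (vs_add u2 (vs_scal t v)) -> t * a1 + s * a2 <= s + t.
Proof.
  intros G1 G2 Hs Ht B1 B2.
  set (l := t / (s + t)).
  assert (Hl : 0 <= l <= 1).
  { unfold l. split.
    - apply Rlt_le, Rdiv_lt_0_compat; lra.
    - apply Rmult_le_reg_r with (s + t); [lra|].
      unfold Rdiv. rewrite Rmult_assoc, Rinv_l by lra. lra. }
  (* the [v]-components cancel in this convex combination *)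
  assert (Hcomb := B_convex _ _ l B1 B2 Hl).
  rewrite !vs_scalDr, !vs_scalA, vs_addACA, <- vs_scalDl in Hcomb.
  replace (l * - s + (1 - l) * t) with 0 in Hcomb by (unfold l; field; lra).
  rewrite vs_scal0, vs_add0r in Hcomb.
  assert (Hle := adm_le1 G G_admissible _ _
    (adm_add G G_admissible _ _ _ _ (adm_scal G G_admissible l _ _ G1)
                                    (adm_scal G G_admissible (1 - l) _ _ G2)) Hcomb).
  assert (Hm : (l * a1 + (1 - l) * a2) * (s + t) <= 1 * (s + t))
    by (apply Rmult_le_compat_r; lra).
  replace ((l * a1 + (1 - l) * a2) * (s + t)) with (t * a1 + s * a2) in Hm
    by (unfold l; field; lra).
  lra.
Qed.

Lemma extension_value : exists c,
  (forall u a s, G (u, a) -> 0 < s -> B (vs_add u (vs_scal (- s) v)) -> a - 1 <= s * c) /\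
  (forall u a t, G (u, a) -> 0 < t -> B (vs_add u (vs_scal t v)) -> a + t * c <= 1).
Proof.
  set (L := fun r => exists u a s, G (u, a) /\ 0 < s /\ B (vs_add u (vs_scal (- s) v)) /\
                                  r = (a - 1) / s).
  set (U := fun r => exists u a t, G (u, a) /\ 0 < t /\ B (vs_add u (vs_scal t v)) /\
                                  r = (1 - a) / t).
  assert (LU : forall l r, L l -> U r -> l <= r).
  { intros l r (u1 & a1 & s & G1 & Hs & B1 & ->) (u2 & a2 & t & G2 & Ht & B2 & ->).
    pose proof (extension_gap u1 a1 u2 a2 s t G1 G2 Hs Ht B1 B2).
    apply Rmult_le_reg_r with (s * t); [nra|].
    replace ((a1 - 1) / s * (s * t)) with (t * (a1 - 1)) by (field; lra).
    replace ((1 - a2) / t * (s * t)) with (s * (1 - a2)) by (field; lra). lra. }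
  pose proof (admissible_zero G G_admissible) as G00.
  destruct (B_absorbing v) as [e [He Hev]].
  assert (Uinh : U (1 / (e / 2))).
  { exists vs_zero, 0, (e / 2). repeat split; auto; [lra| |f_equal; ring].
    rewrite vs_add0l. apply Hev. rewrite Rabs_right; lra. }
  assert (Linh : L ((0 - 1) / (e / 2))).
  { exists vs_zero, 0, (e / 2). repeat split; auto; [lra|].
    rewrite vs_add0l. apply Hev. rewrite Rabs_left; lra. }
  destruct (completeness L) as [c [Hub Hlub]].
  { exists (1 / (e / 2)). intros l Hl. apply LU; auto. }
  { exists ((0 - 1) / (e / 2)); auto. }
  exists c. split.
  - intros u a s Ga Hs Hb.
    assert (Hl : (a - 1) / s <= c) by (apply Hub; exists u, a, s; auto).
    apply Rmult_le_compat_l with (r := s) in Hl; [|lra].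
    replace (s * ((a - 1) / s)) with (a - 1) in Hl by (field; lra). exact Hl.
  - intros u a t Ga Ht Hb.
    assert (Hr : c <= (1 - a) / t).
    { apply Hlub. intros l Hl. apply LU; auto. exists u, a, t; auto. }
    apply Rmult_le_compat_l with (r := t) in Hr; [|lra].
    replace (t * ((1 - a) / t)) with (1 - a) in Hr by (field; lra). lra.
Qed.

Lemma admissible_extend : (forall a, ~ G (v, a)) ->
  exists G', admissible G' /\ (forall p, G p -> G' p) /\ exists a, G' (v, a).
Proof.
  intro Hv. destruct extension_value as [c [Hneg Hpos]].
  exists (fun p => exists u a t, G (u, a) /\ fst p = vs_add u (vs_scal t v) /\
                                 snd p = a + t * c).
  split; [split; simpl|split].
  - intros w b b' (u & a & t & Ga & -> & ->) (u' & a' & t' & Ga' & Hw & ->).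
    destruct (Req_dec t t') as [<- | Htt].
    + apply vs_addIr in Hw. subst u'. rewrite (adm_functional G G_admissible u a a' Ga Ga').
      reflexivity.
    + exfalso. apply vs_add_scal_sub in Hw.
      apply (Hv (/ (t' - t) * (a + -1 * a'))).
      replace v with (vs_scal (/ (t' - t)) (vs_add u (vs_scal (-1) u'))).
      * apply adm_scal, adm_add, adm_scal; auto.
      * rewrite Hw, vs_scalA, Rinv_l, vs_scal1 by lra. reflexivity.
  - intros w1 w2 b1 b2 (u1 & a1 & t1 & G1 & -> & ->) (u2 & a2 & t2 & G2 & -> & ->).
    exists (vs_add u1 u2), (a1 + a2), (t1 + t2). repeat split.
    + apply adm_add; auto.
    + simpl. rewrite vs_addACA, <- vs_scalDl. reflexivity.
    + simpl. ring.
  - intros s w b (u & a & t & Ga & -> & ->). exists (vs_scal s u), (s * a), (s * t).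
    repeat split.
    + apply adm_scal; auto.
    + simpl. rewrite vs_scalDr, vs_scalA. reflexivity.
    + simpl. ring.
  - intros w b (u & a & t & Ga & -> & ->) Hw.
    destruct (Rtotal_order t 0) as [Ht | [-> | Ht]].
    + pose proof (Hneg u a (- t) Ga ltac:(lra) ltac:(rewrite Ropp_involutive; exact Hw)).
      nra.
    + rewrite vs_scal0, vs_add0r in Hw.
      pose proof (adm_le1 G G_admissible u a Ga Hw). lra.
    + exact (Hpos u a t Ga Ht Hw).
  - exists y, 1, 0. repeat split; [apply adm_y, G_admissible| |simpl; ring].
    simpl. rewrite vs_scal0, vs_add0r. reflexivity.
  - intros [u a] Ga. exists u, a, 0. repeat split; auto; simpl.
    + rewrite vs_scal0, vs_add0r. reflexivity.
    + ring.
  - exists c, vs_zero, 0, 1. repeat split; [|simpl; rewrite vs_scal1, vs_add0l; reflexivity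
                                              |simpl; ring].
    apply admissible_zero, G_admissible.
Qed.

End Extension.

Theorem hahn_banach_absorbing : exists F : V -> R,
  (forall u w, F (vs_add u w) = F u + F w) /\ (forall t u, F (vs_scal t u) = t * F u) /\
  F y = 1 /\ (forall u, B u -> F u <= 1).
Proof.
  set (P := fun A : V * R -> Prop => admissible (fun p => y_line p \/ A p)).
  destruct (@classical_sets.Zorn_bigcup _ P) as [A [PA Amax]].
  { intros F FP Ftot. apply admissible_chain_union; [exact FP|].
    intros A1 A2 F1 F2. exact (Ftot A1 A2 F1 F2). }
  set (M := fun p => y_line p \/ A p). fold M in PA.
  assert (Mtotal : forall u, exists a, M (u, a)).
  { intro u. apply NNPP. intro Hu.
    destruct (admissible_extend M u PA) as (G' & HG' & MG' & [a Ga]).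
    { intros a Ha. apply Hu. exists a; exact Ha. }
    apply (Amax G').
    - split.
      + intros p Ap. apply MG'. right; exact Ap.
      + intro G'A. apply Hu. exists a. right. apply G'A, Ga.
    - unfold P. replace (fun p => y_line p \/ G' p) with G'; [exact HG'|].
      apply functional_extensionality; intro p. apply propositional_extensionality.
      split; [tauto|]. intros [Hp | Hp]; auto. apply (admissible_y_line_sub G' HG' p Hp). }
  set (F := fun u => proj1_sig (constructive_indefinite_description _ (Mtotal u))).
  assert (MF : forall u, M (u, F u)).
  { intro u. unfold F. destruct (constructive_indefinite_description _ (Mtotal u)); auto. }
  exists F. repeat split.
  - intros u w. apply (adm_functional M PA (vs_add u w)); [apply MF|apply adm_add; auto].
  - intros t u. apply (adm_functional M PA (vs_scal t u)); [apply MF|apply adm_scal; auto].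
  - apply (adm_functional M PA y); [apply MF|apply adm_y; auto].
  - intros u Hu. apply (adm_le1 M PA u); auto.
Qed.

End HahnBanach.

Definition lcs_vecspace (X : LCS) : vecspace :=
  Build_vecspace X vadd vscal vzero (vadd_assoc X) (vadd_comm X) (vadd_0l X) (vadd_opp X)
    (vscal_1 X) (vscal_assoc X) (vscal_addR X) (vscal_addV X).

Definition prod_vecspace (X Z : LCS) : vecspace.
Proof.
  refine (Build_vecspace (X * Z)
    (fun p q => (vadd (fst p) (fst q), vadd (snd p) (snd q)))
    (fun a p => (vscal a (fst p), vscal a (snd p)))
    (vzero, vzero) _ _ _ _ _ _ _ _);
  intros; repeat match goal with p : (_ * _)%type |- _ => destruct p end; simpl; f_equal;
  first [apply vadd_assoc | apply vadd_comm | apply vadd_0l | apply vadd_opp | apply vscal_1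
        | apply vscal_assoc | apply vscal_addR | apply vscal_addV].
Defined.

Section LCSTheory.
Variable X : LCS.
Implicit Types (x n : X) (N U W : X -> Prop).

Lemma vadd_0r x : vadd x vzero = x.
Proof. exact (vs_add0r (lcs_vecspace X) x). Qed.

Lemma vadd_opp_r x : vadd x (vscal (-1) x) = vzero.
Proof. exact (vs_addNr (lcs_vecspace X) x). Qed.

Lemma vscal_0 x : vscal 0 x = vzero.
Proof. exact (vs_scal0 (lcs_vecspace X) x). Qed.

Lemma vscal_zero a : vscal a (@vzero X) = vzero.
Proof. exact (vs_scal_zero (lcs_vecspace X) a). Qed.

Lemma open_absorbing N : is_open N -> N vzero ->
  forall x, exists e, e > 0 /\ forall t, Rabs t < e -> N (vscal t x).
Proof.
  intros HN N0 x. destruct (vscal_cont X N 0 x HN) as [e [O [He [_ [Ox HO]]]]].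
  { rewrite vscal_0; exact N0. }
  exists e. split; auto. intros t Ht. apply HO; auto. rewrite Rminus_0_r; exact Ht.
Qed.

Lemma open_convex_nbhd U x : is_open U -> U x ->
  exists N, is_open N /\ N vzero /\ convex N /\ forall n, N n -> U (vadd x (vscal (-1) n)).
Proof.
  intros HU Ux.
  destruct (vadd_cont X U x vzero HU) as [U1 [V1 [_ [HV1 [U1x [V10 HUV]]]]]].
  { rewrite vadd_0r; exact Ux. }
  destruct (vscal_cont X V1 (-1) vzero HV1) as [e [O [He [HO [O0 HOV]]]]].
  { rewrite vscal_zero; exact V10. }
  destruct (loc_convex X O HO O0) as [N [HN [N0 [Nconv NO]]]].
  exists N. repeat split; auto. intros n Nn. apply HUV; auto. apply HOV; auto.
  rewrite Rminus_diag, Rabs_R0; exact He.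
Qed.

(* [|f| <= 1] on [W] intersected with [-W]; translates of rescalings of that
   neighbourhood lie in the preimages of small intervals. *)
Lemma is_dual_bounded_linear (f : X -> R) W :
  (forall x y, f (vadd x y) = f x + f y) -> (forall a x, f (vscal a x) = a * f x) ->
  is_open W -> W vzero -> (forall w, W w -> f w <= 1) -> is_dual f.
Proof.
  intros fadd fscal HW W0 fW. split; [exact fadd|split; [exact fscal|]].
  destruct (vscal_cont X W (-1) vzero HW) as [e0 [O [He0 [HO [O0 HOW]]]]].
  { rewrite vscal_zero; exact W0. }
  set (N := fun w => W w /\ O w).
  assert (HN : is_open N) by (apply open_inter; auto).
  assert (fN : forall w, N w -> Rabs (f w) <= 1).
  { intros w [Ww Ow]. apply Rabs_le. split; [|auto].
    assert (Hneg := fW _ (HOW (-1) w ltac:(rewrite Rminus_diag, Rabs_R0; lra) Ow)).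
    rewrite fscal in Hneg. lra. }
  intros Ur HUr.
  set (Fam := fun O' : X -> Prop => is_open O' /\ forall x, O' x -> Ur (f x)).
  replace (fun x => Ur (f x)) with (fun x => exists O', Fam O' /\ O' x).
  { apply open_union. intros O' [HO' _]; exact HO'. }
  apply functional_extensionality; intro x. apply propositional_extensionality; split.
  { intros [O' [[_ HO'] O'x]]. auto. }
  intro Hx. destruct (HUr _ Hx) as [eps [Heps Hball]].
  destruct (vscal_cont X N (2 / eps) vzero HN) as [e' [U2 [He' [HU2 [U20 HU2N]]]]].
  { rewrite vscal_zero. split; auto. }
  destruct (vadd_cont X U2 x (vscal (-1) x) HU2) as [O' [V1 [HO' [_ [O'x [V1x HOV]]]]]].
  { rewrite vadd_opp_r; exact U20. }
  exists O'. split; [split; [exact HO'|]|exact O'x].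
  intros x' O'x'. apply Hball.
  assert (Hb := fN _ (HU2N (2 / eps) _ ltac:(rewrite Rminus_diag, Rabs_R0; lra)
                          (HOV x' _ O'x' V1x))).
  assert (Heps2 : 0 < 2 / eps) by (apply Rdiv_lt_0_compat; lra).
  rewrite fscal, fadd, fscal, Rabs_mult, (Rabs_right (2 / eps)) in Hb by lra.
  assert (Hd : Rabs (f x' + -1 * f x) <= eps / 2).
  { apply Rmult_le_reg_l with (2 / eps); [exact Heps2|].
    replace (2 / eps * (eps / 2)) with 1 by (field; lra). exact Hb. }
  replace (f x' - f x) with (f x' + -1 * f x) by ring. lra.
Qed.

Lemma is_dual_zero : is_dual (fun _ : X => 0).
Proof.
  apply (is_dual_bounded_linear _ (fun _ => True)); intros; try ring.
  - apply open_full.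
  - exact I.
  - lra.
Qed.

End LCSTheory.

Section GraphSeparation.
Variables (X Z : LCS) (g : X -> Z -> Prop).
Hypotheses (g_closed : graph_closed g) (g_convex : graph_convex g).

(* Hahn-Banach applied to [gr g - (x0, z0) + N], where [N] is a convex neighbourhood of
   [0] small enough that [(x, z) - N] misses the graph. *)
Lemma graph_separation x0 z0 x z : g x0 z0 -> ~ g x z ->
  exists (f : X -> R) (h : Z -> R) d, is_dual f /\ is_dual h /\ 0 < d /\
    forall u v, g u v -> f u + h v + d <= f x + h z.
Proof.
  intros G0 Hxz.
  destruct (g_closed x z Hxz) as [U [W [HU [HW [Ux [Wz Hsep]]]]]].
  destruct (open_convex_nbhd X U x HU Ux) as [NX [HNX [NX0 [NXconv NXU]]]].
  destruct (open_convex_nbhd Z W z HW Wz) as [NZ [HNZ [NZ0 [NZconv NZW]]]].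
  set (V := prod_vecspace X Z).
  set (N := fun p : V => NX (fst p) /\ NZ (snd p)).
  set (m := vs_scal (-1) ((x0, z0) : V)).
  set (B := fun p : V =>
    exists u v (n : V), g u v /\ N n /\ p = vs_add (vs_add ((u, v) : V) n) m).
  set (y := vs_add ((x, z) : V) m).
  assert (N_absorbing : forall p : V,
    exists e, e > 0 /\ forall t, Rabs t < e -> N (vs_scal t p)).
  { intros [a b]. destruct (open_absorbing X NX HNX NX0 a) as [e1 [He1 H1]].
    destruct (open_absorbing Z NZ HNZ NZ0 b) as [e2 [He2 H2]].
    exists (Rmin e1 e2). split; [apply Rmin_pos; lra|]. intros t Ht. split.
    - apply H1. pose proof (Rmin_l e1 e2); lra.
    - apply H2. pose proof (Rmin_r e1 e2); lra. }
  assert (N_sub_B : forall n, N n -> B n).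
  { intros n Nn. exists x0, z0, n. split; [exact G0|split; [exact Nn|]].
    symmetry; apply vs_add_subKl. }
  assert (B_convex : forall p q t, B p -> B q -> 0 <= t <= 1 ->
                       B (vs_add (vs_scal t p) (vs_scal (1 - t) q))).
  { intros p q t (u1 & v1 & n1 & G1 & [N1 M1] & ->) (u2 & v2 & n2 & G2 & [N2 M2] & ->) Ht.
    rewrite vs_convex_translate.
    do 3 eexists; split; [|split; [split|reflexivity]]; simpl.
    - apply g_convex; auto.
    - apply NXconv; auto.
    - apply NZconv; auto. }
  assert (B_absorbing : forall p : V,
    exists e, e > 0 /\ forall t, Rabs t < e -> B (vs_scal t p)).
  { intro p. destruct (N_absorbing p) as [e [He HN]]. exists e; split; auto. }
  assert (y_notin_B : ~ B y).
  { intros (u & v & n & Guv & [N1 N2] & Hq). apply vs_add_eq_sub in Hq.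
    injection Hq as -> ->. exact (Hsep _ _ (NXU _ N1) (NZW _ N2) Guv). }
  destruct (hahn_banach_absorbing V B y B_convex B_absorbing y_notin_B)
    as (F & Fadd & Fscal & Fy & FB).
  set (f := fun u : X => F ((u, vzero) : V)).
  set (h := fun w : Z => F ((vzero, w) : V)).
  assert (F_split : forall u w, F ((u, w) : V) = f u + h w).
  { intros u w. unfold f, h. rewrite <- Fadd. simpl. rewrite vadd_0r, vadd_0l. reflexivity. }
  assert (f_dual : is_dual f).
  { apply (is_dual_bounded_linear X f NX); auto.
    - intros a b. unfold f. rewrite <- Fadd. simpl. rewrite vadd_0r. reflexivity.
    - intros t a. unfold f. rewrite <- Fscal. simpl. rewrite vscal_zero. reflexivity.
    - intros n Nn. apply FB, N_sub_B. split; auto. }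
  assert (h_dual : is_dual h).
  { apply (is_dual_bounded_linear Z h NZ); auto.
    - intros a b. unfold h. rewrite <- Fadd. simpl. rewrite vadd_0r. reflexivity.
    - intros t a. unfold h. rewrite <- Fscal. simpl. rewrite vscal_zero. reflexivity.
    - intros n Nn. apply FB, N_sub_B. split; auto. }
  destruct (N_absorbing y) as [e [He HNy]].
  exists f, h, (e / 2). split; [exact f_dual|split; [exact h_dual|split; [lra|]]].
  intros u v Guv.
  assert (Hb : F (vs_add (vs_add ((u, v) : V) (vs_scal (e / 2) y)) m) <= 1).
  { apply FB. exists u, v, (vs_scal (e / 2) y). split; [exact Guv|split; [|reflexivity]].
    apply HNy. rewrite Rabs_right; lra. }
  rewrite !Fadd, Fscal, Fy in Hb. unfold y in Fy. rewrite Fadd in Fy.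
  rewrite <- !F_split. lra.
Qed.

End GraphSeparation.

Lemma inQ_add_cone (Z : LCS) (C : Z -> Prop) (A : Z -> Prop) a c :
  inQ C A -> A a -> C c -> A (vadd a c).
Proof.
  intros HQ Aa Cc. apply HQ. intros U _ Uac. exists (vadd a c). split; auto.
  intros K _ HK. apply HK. exists a, c. auto.
Qed.

Lemma neg_dual_of_graph_bound (X Z : LCS) (C : Z -> Prop) (g : X -> Z -> Prop)
  (f : X -> R) (h : Z -> R) K :
  convex_cone C -> (forall x, inQ C (g x)) -> is_dual h -> (exists x0 z0, g x0 z0) ->
  (forall u v, g u v -> f u + h v <= K) -> neg_dual C h.
Proof.
  intros [_ [_ Cscal]] HQ hdual [x0 [z0 G0]] Hbound.
  split; [exact hdual|]. destruct hdual as [hadd [hscal _]].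
  intros c Cc. apply Rnot_lt_le. intro Hc.
  set (t := (Rabs (K - f x0 - h z0) + 1) / h c).
  pose proof (Rabs_pos (K - f x0 - h z0)).
  assert (Ht : 0 <= t) by (apply Rlt_le, Rdiv_lt_0_compat; lra).
  pose proof (Hbound _ _ (inQ_add_cone Z C _ z0 (vscal t c) (HQ x0) G0 (Cscal t c Ht Cc)))
    as Hb.
  rewrite hadd, hscal in Hb.
  assert (t * h c = Rabs (K - f x0 - h z0) + 1) by (unfold t; field; lra).
  pose proof (RRle_abs (K - f x0 - h z0)). lra.
Qed.

Lemma graph_sub_conj2 (X Z : LCS) (C : Z -> Prop) (g : X -> Z -> Prop) x z :
  g x z -> conj2 C g x z.
Proof. intros Gxz xi r zs _ _ w Hw. rewrite vadd_comm. exact (Hw x z Gxz). Qed.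

(* For the empty graph, [g^*] at [(hat 0, -1, 0)] is all of [Z] while the conaffine
   function [S_(hat 0, -1, 0)] is empty. *)
Lemma conj2_empty_graph (X Z : LCS) (C : Z -> Prop) (g : X -> Z -> Prop) x z :
  (forall u v, ~ g u v) -> ~ conj2 C g x z.
Proof.
  intros Hemp Hz.
  assert (Hx := Hz (Hat (fun _ => 0)) (-1) (fun _ => 0) (is_dual_zero X)
                   (conj (is_dual_zero Z) (fun _ _ => Rle_refl 0)) vzero).
  unfold S_conaff, xi_r in Hx. destruct (Rle_dec 0 (-1)) as [Hr | _]; [lra|].
  apply Hx. intros u v Guv. exfalso; exact (Hemp u v Guv).
Qed.

Theorem mainTheorem20 (X Z : LCS) (C : Z -> Prop)
  (HC : convex_cone C)
  (HCm : exists zs, neg_dual C zs /\ exists z, zs z <> 0)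
  (g : X -> Z -> Prop)
  (Hg : forall x, inQ C (g x))
  (Hclosed : graph_closed g) (Hconv : graph_convex g) :
  forall x z, conj2 C g x z <-> g x z.
Proof.
  intros x z; split; [|apply graph_sub_conj2].
  intro Hz. apply NNPP; intro Hxz.
  destruct (classic (exists x0 z0, g x0 z0)) as [Hne | Hemp].
  2: { apply (conj2_empty_graph X Z C g x z); [|exact Hz]. intros u v Guv. eauto. }
  destruct Hne as [x0 [z0 G0]].
  destruct (graph_separation X Z g Hclosed Hconv x0 z0 x z G0 Hxz)
    as (f & h & d & f_dual & h_dual & Hd & Hsep).
  assert (h_neg : neg_dual C h).
  { apply (neg_dual_of_graph_bound X Z C g f h (f x + h z - d)); eauto.
    intros u v Guv. pose proof (Hsep u v Guv); lra. }
  assert (Hx := Hz (Lin f) (f x + h z - d) h f_dual h_neg vzero).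
  unfold S_conaff, xi_r, Rbar_le in Hx. rewrite vadd_0l in Hx.
  enough (f x - (f x + h z - d) <= - h z) by lra.
  apply Hx. intros u v Guv. unfold S_conaff, xi_r, Rbar_le. rewrite vadd_0r.
  pose proof (Hsep u v Guv). lra.
Qed.
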